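(* Let $\mathcal D=(\mathsf D_1,\dots,\mathsf D_m)$ be a family of even cycles that contains no rainbow even cycle, and suppose $\mathcal D$ contains a rainbow $5$-cycle $\widetilde{\mathsf C}=\{\mathsf e_i=(v_iv_{i+1},\alpha_i): i=1,\dots,5\}$ (indices of $v$ and $\alpha$ taken modulo $5$, so $v_6=v_1$). Then there exist a shift $j\in\{0,1,2,3,4\}$, a vertex $v^*\notin\{v_1,\dots,v_5\}$ and an index $k\in\{1,\dots,5\}$ such that all five edges $(v_iv_{i+1},\alpha_{i+j})$, $i=1,\dots,5$, belong to $\mathcal D$, and at least one of the edges $(v^*v_k,\alpha_{k+j-1})$, $(v^*v_k,\alpha_{k+j})$ belongs to $\mathcal D$.
   Context: A (colored) graph is a finite set $\mathsf G$ of pairs $(e,\alpha)$, where the $e$'s are pairwise distinct 2-element subsets $\{u,v\}$ (written $uv$) of a vertex set and $\alpha$ is a color (colors may repeat). $\chi(\mathsf G)$ is its set of colors; $\mathsf G$ is rainbow if $|\chi(\mathsf G)|=|\mathsf G|$. A cycle is a colored graph whose underlying uncolored edges form a cycle; a $k$-cycle has $k$ edges; even cycles have even length. A family of cycles is a list $\mathcal D=(\mathsf D_1,\dots,\mathsf D_m)$ of cycles on a common vertex set, where all edges of $\mathsf D_i$ receive one color and different $\mathsf D_i$ receive different colors (underlying uncolored cycles may coincide). An edge $(uv,\alpha)$ belongs to $\mathcal D$ if it belongs to some $\mathsf D_i$ (necessarily the one of color $\alpha$). $\mathcal D$ contains a graph $\mathsf G$ if $\mathsf G\subseteq\bigcup_i\mathsf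 D_i$; a rainbow even cycle in $\mathcal D$ is a contained graph that is a rainbow even cycle. *)

From mathcomp Require Import all_boot.
Set Implicit Arguments. Unset Strict Implicit. Unset Printing Implicit Defensive.

(* An (uncolored) cycle on vertex type V is represented by the cyclic sequence
   of its vertices [c_0; ...; c_{n-1}], pairwise distinct, n >= 3;
   its edges are c_k c_{k+1 mod n}.  Its length is n. *)
Definition is_cycle (V : eqType) (c : seq V) : bool := uniq c && (2 < size c).

Definition even_cycle (V : eqType) (c : seq V) : bool :=
  is_cycle c && ~~ odd (size c).

Definition cyc_edge (V : eqType) (c : seq V) (u v : V) : bool :=
  ((u \in c) && (next c u == v)) || ((v \in c) && (next c v == u)).

(* A family of cycles D = (D_1,...,D_m): D i is the underlying cycle of D_i,
   and the (common) colour of all edges of D_i is i itself (colours are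
   pairwise distinct across the family, so colours are identified with indices). *)
Definition in_family (V : eqType) (m : nat) (D : 'I_m -> seq V)
  (u v : V) (a : 'I_m) : bool := cyc_edge (D a) u v.

Definition family_of_even_cycles (V : eqType) (m : nat) (D : 'I_m -> seq V) :=
  forall a : 'I_m, even_cycle (D a).

Definition has_rainbow_even_cycle (V : eqType) (m : nat) (D : 'I_m -> seq V) :=
  exists (c : seq V) (cols : seq 'I_m) (a0 : 'I_m) (v0 : V),
    [/\ even_cycle c, size cols = size c, uniq cols &
        forall k, k < size c ->
          in_family D (nth v0 c k) (nth v0 c (k.+1 %% size c)) (nth a0 cols k)].

(* Orient the cycle of colour al i so that it runs from v i to v (i+1), and let
   p_i be the vertex before v i and n_i the vertex after v (i+1) on it.  If some
   p_i or n_i lies off the pentagon, it is the required vertex (shift 0).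
   Otherwise every colour al i has the three edges p_i v_i, v_i v_(i+1),
   v_(i+1) n_i on the pentagon, with p_i, n_i outside {v_i, v_(i+1)} and
   p_i <> n_i because an even cycle is not a 3-cycle.  A finite check over all
   such positions shows that these edges contain a rainbow 4-cycle unless
   p_i = v_(i-1) and n_i = v_(i+2) for all i; then every pentagon edge also
   carries the colours of its two neighbours (shifts 1 and 4).  In that case
   follow the cycle of colour al 0 beyond v_4 v_0 v_1 v_2: the vertex before
   v_4 or the vertex after v_2 leaves the pentagon, since otherwise parity
   forces the chord v_2 v_4, and v_4 v_0 v_1 v_2 becomes a rainbow 4-cycle with
   colours al 3, al 4, al 1, al 0. *)

From mathcomp Require Import all_boot zify.
Set Implicit Arguments. Unset Strict Implicit. Unset Printing Implicit Defensive.

Section CycleWalk.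
Variables (V : eqType) (c : seq V).

Lemma index_next x : uniq c -> x \in c ->
  index (next c x) c = (index x c).+1 %% size c.
Proof.
move=> Uc xc; rewrite next_nth xc.
case: c Uc xc => [//|y p] Uc xc.
have : index x (y :: p) <= size p by rewrite -ltnS index_mem.
rewrite leq_eqVlt => /orP[/eqP E | lt].
- by rewrite E nth_default // index_head /= modnn.
- rewrite -[nth y p _]/(nth y (y :: p) (index x (y :: p)).+1) index_uniq //=.
  by rewrite modn_small.
Qed.

Lemma mem_iter_next x d : (iter d (next c) x \in c) = (x \in c).
Proof. by elim: d => //= d IH; rewrite mem_next. Qed.

Lemma index_iter_next x d : uniq c -> x \in c ->
  index (iter d (next c) x) c = (index x c + d) %% size c.
Proof.
move=> Uc xc; elim: d => [|d IH].
  by rewrite addn0 modn_small // index_mem.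
rewrite iterS index_next ?mem_iter_next // IH.
by rewrite -addn1 modnDml addn1 addnS.
Qed.

Lemma iter_next_eq x d : uniq c -> x \in c ->
  (iter d (next c) x == x) = (size c %| d).
Proof.
move=> Uc xc; have xlt : index x c < size c by rewrite index_mem.
rewrite -(inj_in_eq (index_inj x (s := c))) ?mem_iter_next // index_iter_next //.
by rewrite -[X in _ == X](modn_small xlt) -[X in _ == X %% _]addn0 eqn_modDl mod0n.
Qed.

End CycleWalk.

Lemma even_cycle_ndvd (V : eqType) (c : seq V) d :
  even_cycle c -> 0 < d < 6 -> d != 4 -> ~~ (size c %| d).
Proof.
case/andP=> /andP[_ c3] ev /andP[d0 d6] d4; apply/negP => cd.
have := dvdn_leq d0 cd; move: cd ev c3 d4 d6.
by case: (size c) => [|[|[|[|[|[|s]]]]]] //; case: d d0 => [|[|[|[|[|[|d]]]]]].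
Qed.

Lemma iter_next_neq (V : eqType) (c : seq V) x d :
  even_cycle c -> x \in c -> 0 < d < 6 -> d != 4 -> iter d (next c) x != x.
Proof.
move=> ec xc d6 d4; have Uc : uniq c by case/andP: ec => /andP[].
by rewrite iter_next_eq // even_cycle_ndvd.
Qed.

Section Orientation.
Variables (V : eqType) (c : seq V).

Lemma cyc_edgeC x y : cyc_edge c x y = cyc_edge c y x.
Proof. by rewrite /cyc_edge orbC. Qed.

Lemma cyc_edge_next x : x \in c -> cyc_edge c x (next c x).
Proof. by move=> xc; rewrite /cyc_edge xc eqxx. Qed.

Lemma cyc_edge_mem x y : cyc_edge c x y -> x \in c.
Proof. by case/orP=> /andP[// yc /eqP <-]; rewrite mem_next. Qed.

Lemma cyc_edge_rev : uniq c -> cyc_edge (rev c) =2 cyc_edge c.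
Proof.
move=> Uc x y; rewrite /cyc_edge !mem_rev !next_rev // orbC.
have prevE u w : (u \in c) && (prev c u == w) = (w \in c) && (next c w == u).
  apply/idP/idP => /andP[uc /eqP <-].
    by rewrite mem_prev uc next_prev ?eqxx.
  by rewrite mem_next uc prev_next ?eqxx.
by rewrite !prevE.
Qed.

Lemma even_cycle_rev : even_cycle (rev c) = even_cycle c.
Proof. by rewrite /even_cycle /is_cycle rev_uniq size_rev. Qed.

Definition orient x y := if next c x == y then c else rev c.

Hypothesis Uc : uniq c.

Lemma even_cycle_orient x y : even_cycle (orient x y) = even_cycle c.
Proof. by rewrite /orient; case: ifP; rewrite ?even_cycle_rev. Qed.

Lemma cyc_edge_orient x y : cyc_edge (orient x y) =2 cyc_edge c.
Proof. by rewrite /orient; case: ifP => // _; apply: cyc_edge_rev. Qed.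

Lemma next_orient x y : cyc_edge c x y -> next (orient x y) x = y.
Proof.
rewrite /orient; case: ifP => [/eqP // | nxy].
case/orP=> /andP[yc /eqP nyx]; first by rewrite nyx eqxx in nxy.
by rewrite next_rev // -nyx prev_next.
Qed.

Lemma mem_orient x y : cyc_edge c x y -> x \in orient x y.
Proof. by move/cyc_edge_mem; rewrite /orient; case: ifP; rewrite ?mem_rev. Qed.

End Orientation.

Definition range5 := iota 0 5.

Definition choices (T : Type) (ls : seq (seq T)) : seq (seq T) :=
  foldr (fun l acc => [seq x :: s | x <- l, s <- acc]) [:: [::]] ls.

Lemma mem_choices (T : eqType) (s : seq T) (ls : seq (seq T)) :
  all2 (fun x l => x \in l) s ls -> s \in choices ls.
Proof.
elim: ls s => [|l ls IH] [|x s] //= /andP[xl /IH sls].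
exact: allpairs_f.
Qed.

Definition same_edge (a b x y : nat) :=
  ((x == a) && (y == b)) || ((x == b) && (y == a)).

Definition rainbow4 (E : nat -> nat -> nat -> bool) (xs cs : seq nat) :=
  [&& size xs == 4, size cs == 4, uniq xs, uniq cs, all (gtn 5) xs, all (gtn 5) cs &
      all (fun k => E (nth 0 cs k) (nth 0 xs k) (nth 0 xs (k.+1 %% 4))) (iota 0 4)].

(* One representative of each 4-cycle of the complete graph on the pentagon. *)
Definition cycles4 := [seq xs <- choices (nseq 4 range5) | uniq xs &&
  let: (a, b, c, d) := (nth 0 xs 0, nth 0 xs 1, nth 0 xs 2, nth 0 xs 3) in
  [&& a < b, a < c, a < d & b < d]].

Definition has_rainbow4 (E : nat -> nat -> nat -> bool) :=
  let colours xs k := [seq i <- range5 | E i (nth 0 xs k) (nth 0 xs (k.+1 %% 4))] in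
  has (fun xs => has (rainbow4 E xs) (choices (map (colours xs) (iota 0 4)))) cycles4.

(* Pentagon vertices and colours are both indexed by 0..4; the i-th entry of
   [ps] gives the positions of p_i and n_i. *)
Definition config_edge (ps : seq (nat * nat)) (i x y : nat) :=
  let: (p, n) := nth (0, 0) ps i in
  [|| same_edge i (i.+1 %% 5) x y, same_edge p i x y | same_edge (i.+1 %% 5) n x y].

Definition admissible (i : nat) (pn : nat * nat) :=
  [&& pn.1 \in range5, pn.2 \in range5, pn.1 \notin [:: i; i.+1 %% 5],
      pn.2 \notin [:: i; i.+1 %% 5] & pn.1 != pn.2].

Definition twisted_config (ps : seq (nat * nat)) :=
  all (fun i => nth (0, 0) ps i == ((i + 4) %% 5, (i + 2) %% 5)) range5.

Definition positions i :=
  [seq pn <- [seq (a, b) | a <- range5, b <- range5] | admissible i pn].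

Definition configs := choices (map positions range5).

Lemma configs_check :
  all (fun ps => twisted_config ps || has_rainbow4 (config_edge ps)) configs.
Proof. by vm_compute. Qed.

Definition config_of (P N : nat -> nat) := [seq (P i, N i) | i <- range5].

Lemma pentagon_config (P N : nat -> nat) :
  (forall i, i < 5 -> admissible i (P i, N i)) ->
  twisted_config (config_of P N) || has_rainbow4 (config_edge (config_of P N)).
Proof.
move=> adm; apply: (allP configs_check); apply: mem_choices.
have opt i : i < 5 -> (P i, N i) \in positions i.
  move=> lti; have PNi := adm i lti; rewrite mem_filter PNi.
  by case/and3P: PNi => Pi Ni _; apply: allpairs_f.
by rewrite /= !opt.
Qed.

Section RainbowPentagon.
Variables (V : eqType) (m : nat) (D : 'I_m -> seq V) (v : nat -> V) (al : nat -> 'I_m).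
Hypothesis D_even : family_of_even_cycles D.
Hypothesis no_rainbow : ~ has_rainbow_even_cycle D.
Hypothesis v_inj : {in gtn 5 &, injective v}.
Hypothesis al_inj : {in gtn 5 &, injective al}.
Hypothesis pentagon_edge : forall i, i < 5 -> in_family D (v i) (v (i.+1 %% 5)) (al i).

Lemma in_familyC a x y : in_family D x y a = in_family D y x a.
Proof. exact: cyc_edgeC. Qed.

Lemma rainbow_quad (xs cs : seq nat) :
  size xs = 4 -> size cs = 4 -> uniq xs -> uniq cs ->
  all (gtn 5) xs -> all (gtn 5) cs ->
  (forall k, k < 4 ->
     in_family D (v (nth 0 xs k)) (v (nth 0 xs (k.+1 %% 4))) (al (nth 0 cs k))) ->
  has_rainbow_even_cycle D.
Proof.
move=> sx sc ux uc /allP xs5 /allP cs5 edges.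
exists (map v xs), (map al cs), (al 0), (v 0); split.
- rewrite /even_cycle /is_cycle size_map sx !andbT map_inj_in_uniq //.
  by move=> a b /xs5 a5 /xs5 b5; apply: v_inj.
- by rewrite !size_map sx sc.
- by rewrite map_inj_in_uniq // => a b /cs5 a5 /cs5 b5; apply: al_inj.
- rewrite size_map sx => k k4.
  by rewrite !(nth_map 0) ?sx ?sc ?ltn_mod //; apply: edges.
Qed.

Section IndexEdges.
Variable E : nat -> nat -> nat -> bool.
Hypothesis E_sound : forall i x y, i < 5 -> x < 5 -> y < 5 ->
  E i x y -> in_family D (v x) (v y) (al i).

Lemma rainbow4_lift xs cs : rainbow4 E xs cs -> has_rainbow_even_cycle D.
Proof.
case/and5P=> /eqP sx /eqP sc ux uc /and3P[xs5 cs5 /allP edges].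
apply: (rainbow_quad sx sc ux uc xs5 cs5) => k k4.
have /edges : k \in iota 0 4 by rewrite mem_iota.
by apply: E_sound; [apply: (allP cs5) | apply: (allP xs5) | apply: (allP xs5)];
   rewrite mem_nth ?sx ?sc ?ltn_mod.
Qed.

Lemma has_rainbow4_lift : has_rainbow4 E -> has_rainbow_even_cycle D.
Proof. by case/hasP=> xs _ /hasP[cs _]; apply: rainbow4_lift. Qed.

End IndexEdges.

Lemma same_edge_in_family a b x y c :
  in_family D (v a) (v b) c -> same_edge a b x y -> in_family D (v x) (v y) c.
Proof. by move=> ab /orP[] /andP[/eqP-> /eqP->]; rewrite // in_familyC. Qed.

Lemma uniq_family a : uniq (D a).
Proof. by case/andP: (D_even a) => /andP[]. Qed.

Definition oriented i := orient (D (al i)) (v i) (v (i.+1 %% 5)).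

Lemma cyc_edge_oriented i x y : cyc_edge (oriented i) x y = in_family D x y (al i).
Proof. exact/cyc_edge_orient/uniq_family. Qed.

Lemma even_cycle_oriented i : even_cycle (oriented i).
Proof. by rewrite even_cycle_orient. Qed.

Lemma uniq_oriented i : uniq (oriented i).
Proof. by case/andP: (even_cycle_oriented i) => /andP[]. Qed.

Lemma next_oriented i : i < 5 -> next (oriented i) (v i) = v (i.+1 %% 5).
Proof. by move=> i5; apply/next_orient/pentagon_edge; rewrite ?uniq_family. Qed.

Lemma mem_oriented i : i < 5 -> v i \in oriented i.
Proof. by move=> i5; apply/mem_orient/pentagon_edge. Qed.

Lemma mem_oriented_succ i : i < 5 -> v (i.+1 %% 5) \in oriented i.
Proof. by move=> i5; rewrite -next_oriented // mem_next mem_oriented. Qed.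

Lemma in_family_next i x :
  x \in oriented i -> in_family D x (next (oriented i) x) (al i).
Proof. by move=> xC; rewrite -cyc_edge_oriented cyc_edge_next. Qed.

Lemma in_family_prev i x :
  x \in oriented i -> in_family D (prev (oriented i) x) x (al i).
Proof.
move=> xC; rewrite -[x in in_family _ _ x](next_prev (uniq_oriented i)).
by rewrite in_family_next // mem_prev.
Qed.

Lemma oriented_iter_neq i x d :
  x \in oriented i -> 0 < d < 6 -> d != 4 -> iter d (next (oriented i)) x != x.
Proof. exact/iter_next_neq/even_cycle_oriented. Qed.

Definition pentagon := [seq v i | i <- range5].

Lemma pentagon_index x :
  x \in pentagon -> index x pentagon < 5 /\ x = v (index x pentagon).
Proof.
move=> xP; have lt5 : index x pentagon < 5 by rewrite -[5](size_map v range5) index_mem.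
by split=> //; rewrite -[LHS](nth_index (v 0) xP) (nth_map 0) ?nth_iota.
Qed.

Lemma notin_pentagon x i : x \notin pentagon -> i < 5 -> x != v i.
Proof. by move=> xP i5; apply: contraNneq xP => ->; apply: map_f; rewrite mem_iota. Qed.

Definition shifted_pentagon j :=
  forall i, i < 5 -> in_family D (v i) (v (i.+1 %% 5)) (al ((i + j) %% 5)).

Definition pendant j x k :=
  [/\ j < 5, k < 5, (forall i, i < 5 -> x != v i), shifted_pentagon j &
      in_family D x (v k) (al ((k + j + 4) %% 5)) || in_family D x (v k) (al ((k + j) %% 5))].

Definition before i := prev (oriented i) (v i).
Definition after i := next (oriented i) (v (i.+1 %% 5)).

Lemma next_before i : next (oriented i) (before i) = v i.
Proof. exact/next_prev/uniq_oriented. Qed.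

Lemma mem_before i : i < 5 -> before i \in oriented i.
Proof. by move=> i5; rewrite mem_prev mem_oriented. Qed.

Lemma shifted_pentagon0 : shifted_pentagon 0.
Proof. by move=> i i5; rewrite addn0 (modn_small i5); apply: pentagon_edge. Qed.

Lemma pendant_before i : i < 5 -> before i \notin pentagon -> pendant 0 (before i) i.
Proof.
move=> i5 bP; split=> //; first by move=> t; apply: notin_pentagon.
  exact: shifted_pentagon0.
by rewrite addn0 (modn_small i5) in_family_prev ?mem_oriented ?orbT.
Qed.

Lemma pendant_after i :
  i < 5 -> after i \notin pentagon -> pendant 0 (after i) (i.+1 %% 5).
Proof.
move=> i5 aP; split; rewrite ?ltn_mod //; first by move=> t; apply: notin_pentagon.
  exact: shifted_pentagon0.
have -> : (i.+1 %% 5 + 0 + 4) %% 5 = i by case: i i5 {aP} => [|[|[|[|[|]]]]].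
by rewrite in_familyC in_family_next ?mem_oriented_succ.
Qed.

Lemma before_after_admissible i (P N : nat) : i < 5 -> P < 5 -> N < 5 ->
  before i = v P -> after i = v N -> admissible i (P, N).
Proof.
move=> i5 P5 N5 bP aN; have bC := mem_before i5; have vC := mem_oriented i5.
have nxt := next_oriented i5; have nb := next_before i.
have idx a b : v a != v b -> a != b by apply: contraNneq => ->.
rewrite /admissible /= !mem_iota !inE !negb_or P5 N5 /=.
rewrite -!andbA; apply/and5P; split; apply: idx; rewrite -?bP -?aN.
- by have := oriented_iter_neq (d := 1) bC; rewrite /= nb eq_sym; apply.
- by have := oriented_iter_neq (d := 2) bC; rewrite /= nb nxt eq_sym; apply.
- by have := oriented_iter_neq (d := 2) vC; rewrite /= nxt; apply.
- by have := oriented_iter_neq (d := 1) (mem_oriented_succ i5); apply.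
- by have := oriented_iter_neq (d := 3) bC; rewrite /= nb nxt eq_sym; apply.
Qed.

Lemma pentagon_twisted :
  (forall i, i < 5 -> (before i \in pentagon) && (after i \in pentagon)) ->
  forall i, i < 5 -> before i = v ((i + 4) %% 5) /\ after i = v ((i + 2) %% 5).
Proof.
move=> inP; pose P i := index (before i) pentagon; pose N i := index (after i) pentagon.
have PN i : i < 5 -> [/\ P i < 5, before i = v (P i), N i < 5 & after i = v (N i)].
  by case/inP/andP => /pentagon_index[? ?] /pentagon_index[? ?].
have config_nth i : i < 5 -> nth (0, 0) (config_of P N) i = (P i, N i).
  by move=> i5; rewrite (nth_map 0) ?nth_iota.
have /orP[/allP twisted | rainbow] : twisted_config (config_of P N) ||
    has_rainbow4 (config_edge (config_of P N)).
- apply: pentagon_config => i i5; have [? ? ? ?] := PN i i5.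
  exact: before_after_admissible.
- move=> i i5; have [_ -> _ ->] := PN i i5.
  have := twisted i; rewrite mem_iota config_nth // => /(_ i5) /eqP[-> ->].
  by [].
exfalso; apply/no_rainbow/(has_rainbow4_lift _ rainbow) => i x y i5 _ _.
rewrite /config_edge config_nth //; have [_ bi _ ai] := PN i i5.
case/or3P; apply: same_edge_in_family.
- exact: pentagon_edge.
- by rewrite -bi in_family_prev ?mem_oriented.
- by rewrite -ai in_family_next ?mem_oriented_succ.
Qed.

Section Twisted.
Hypothesis twist :
  forall i, i < 5 -> before i = v ((i + 4) %% 5) /\ after i = v ((i + 2) %% 5).

Lemma shifted_pentagon1 : shifted_pentagon 1.
Proof.
move=> t t5; have s5 : (t + 1) %% 5 < 5 by rewrite ltn_mod.
have := in_family_prev (mem_oriented s5); rewrite -/(before _) (twist s5).1 addn1.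
by have -> : (t.+1 %% 5 + 4) %% 5 = t by case: t t5 {s5} => [|[|[|[|[|]]]]].
Qed.

Lemma shifted_pentagon4 : shifted_pentagon 4.
Proof.
move=> t t5; have s5 : (t + 4) %% 5 < 5 by rewrite ltn_mod.
have := in_family_next (mem_oriented_succ s5); rewrite -/(after _) (twist s5).2.
by have [-> ->] : ((t + 4) %% 5).+1 %% 5 = t /\ ((t + 4) %% 5 + 2) %% 5 = t.+1 %% 5
  by case: t t5 {s5} => [|[|[|[|[|]]]]].
Qed.

Let q := prev (oriented 0) (v 4).
Let r := next (oriented 0) (v 2).

Lemma oriented0_walk : [/\ v 4 \in oriented 0, v 2 \in oriented 0,
  next (oriented 0) (v 4) = v 0, next (oriented 0) (v 0) = v 1 &
  next (oriented 0) (v 1) = v 2].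
Proof.
have [b0 a0] := twist (isT : 0 < 5).
rewrite -[v 4]b0 -[v 2]a0 next_before next_oriented // mem_before // mem_next.
by rewrite mem_oriented_succ.
Qed.

Lemma pendant_shift1 : q \notin pentagon -> pendant 1 q 4.
Proof.
move=> qP; split=> //; first by move=> t; apply: notin_pentagon.
  exact: shifted_pentagon1.
by have [v4C _ _ _ _] := oriented0_walk; rewrite in_family_prev ?orbT.
Qed.

Lemma pendant_shift4 : r \notin pentagon -> pendant 4 r 2.
Proof.
move=> rP; split=> //; first by move=> t; apply: notin_pentagon.
  exact: shifted_pentagon4.
by have [_ v2C _ _ _] := oriented0_walk; rewrite in_familyC in_family_next.
Qed.

(* q -> v 4 -> v 0 -> v 1 -> v 2 -> r is a walk of length 5 on an even cycle. *)
Lemma next_oriented0_v2 : q \in pentagon -> r \in pentagon -> r = v 4.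
Proof.
move=> /pentagon_index[t5 qE] /pentagon_index[u5 rE].
set t := index q _ in t5 qE; set u := index r _ in u5 rE.
have [v4C v2C n4 n0 n1] := oriented0_walk.
have qC : q \in oriented 0 by rewrite mem_prev.
have nq : next (oriented 0) q = v 4 by rewrite next_prev ?uniq_oriented.
have idx a b : v a != v b -> a != b by apply: contraNneq => ->.
have t_ne : [/\ t != 4, t != 0 & t != 1].
  split; apply: idx; rewrite -qE eq_sym.
  - by have := oriented_iter_neq (d := 1) qC; rewrite /= nq; apply.
  - by have := oriented_iter_neq (d := 2) qC; rewrite /= nq n4; apply.
  - by have := oriented_iter_neq (d := 3) qC; rewrite /= nq n4 n0; apply.
have u_ne : [/\ u != 2, u != 1, u != 0 & u != t].
  split; apply: idx; rewrite -rE -?qE.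
  - by have := oriented_iter_neq (d := 1) v2C; apply.
  - have v1C := mem_oriented_succ (isT : 0 < 5).
    by have := oriented_iter_neq (d := 2) v1C; rewrite /= n1; apply.
  - have v0C := mem_oriented (isT : 0 < 5).
    by have := oriented_iter_neq (d := 3) v0C; rewrite /= n0 n1; apply.
  - by have := oriented_iter_neq (d := 5) qC; rewrite /= nq n4 n0 n1 eq_sym; apply.
have [[t4 t0 t1] [u2 u1 u0 ut]] := (t_ne, u_ne).
have /orP[/eqP t2 | /eqP u4] : (t == 2) || (u == 4) by lia.
- by rewrite -nq qE t2.
- by rewrite rE u4.
Qed.

Lemma twisted_rainbow : q \in pentagon -> r \in pentagon -> has_rainbow_even_cycle D.
Proof.
move=> qP rP; have r4 := next_oriented0_v2 qP rP.
have [_ v2C _ _ _] := oriented0_walk.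
apply: (@rainbow_quad [:: 4; 0; 1; 2] [:: 3; 4; 1; 0]) => //.
case=> [|[|[|[|]]]] //= _.
- by have := in_family_next (mem_oriented_succ (isT : 3 < 5)); rewrite -/(after _) (twist _).2.
- by have := in_family_next (mem_oriented_succ (isT : 4 < 5)); rewrite -/(after _) (twist _).2.
- exact: pentagon_edge.
- by have := in_family_next v2C; rewrite -/r r4.
Qed.

Lemma twisted_pendant : exists j x k, pendant j x k.
Proof.
have [qP | /pendant_shift1] := boolP (q \in pentagon); last by exists 1, q, 4.
have [rP | /pendant_shift4] := boolP (r \in pentagon); last by exists 4, r, 2.
by case: no_rainbow; apply: twisted_rainbow.
Qed.

End Twisted.

Lemma exists_pendant : exists j x k, pendant j x k.
Proof.
pose inside i := (before i \in pentagon) && (after i \in pentagon).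
have [inP | ] := boolP (all inside range5).
  apply/twisted_pendant/pentagon_twisted => i i5.
  by apply: (allP inP); rewrite mem_iota.
case/allPn=> i; rewrite mem_iota => /= i5 /nandP[/(pendant_before i5) | /(pendant_after i5)].
- by exists 0, (before i), i.
- by exists 0, (after i), (i.+1 %% 5).
Qed.

End RainbowPentagon.

Unset Implicit Arguments.

Theorem lemma3p6 (V : eqType) (m : nat) (D : 'I_m -> seq V)
  (v : nat -> V) (al : nat -> 'I_m) :
  family_of_even_cycles D ->
  ~ has_rainbow_even_cycle D ->
  {in gtn 5 &, injective v} ->
  {in gtn 5 &, injective al} ->
  (forall i, i < 5 -> in_family D (v i) (v (i.+1 %% 5)) (al i)) ->
  exists j vs k,
    [/\ j < 5, k < 5, (forall i, i < 5 -> vs != v i),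
        (forall i, i < 5 -> in_family D (v i) (v (i.+1 %% 5)) (al ((i + j) %% 5))) &
        in_family D vs (v k) (al ((k + j + 4) %% 5))
        || in_family D vs (v k) (al ((k + j) %% 5))].
Proof. exact: exists_pendant. Qed.
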